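(* Let $p\ge 3$ be an integer, let $x$ be a right vertex of $T_H$, and let $f$ be any $2p$ distance coloring of $T_H$. Then there exists a vertex $u\in\mathcal{F}_{x,p+1}$ such that $f(u)\notin f(V(D_x^{2p}))$.
   Context: $T_H$ is the infinite hexagonal grid with vertex set $\mathbb{Z}^2$: $(i,j)$ is adjacent to $(i,j\pm1)$, and $(i,j)$ is adjacent to $(i+1,j)$ iff $i+j$ is even; no other edges. A vertex $(i,j)$ with $i+j$ even is called a right vertex. $d(u,v)$ is graph distance. For $l\in\mathbb{N}$, an $l$ distance coloring is a map $f:V(T_H)\to\{1,\dots,n\}$ with $f(u)\ne f(v)$ for all distinct $u,v$ with $d(u,v)\le l$. For a vertex $x$ and integer $k\ge0$, $\mathcal{F}_{x,k}=\{u\in V(T_H): d(x,u)=k\}$. $D_x^{2p}$ is the subgraph of $T_H$ induced by $\{w: d(w,x)\le p\}$. *)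

From Stdlib Require Import ZArith Lia.
Open Scope Z_scope.

Definition vertex := (Z * Z)%type.

Definition right_vertex (v : vertex) : Prop := Z.Even (fst v + snd v).

Definition adj (u v : vertex) : Prop :=
  (fst v = fst u /\ (snd v = snd u + 1 \/ snd v = snd u - 1))
  \/ (right_vertex u /\ fst v = fst u + 1 /\ snd v = snd u)
  \/ (right_vertex v /\ fst u = fst v + 1 /\ snd u = snd v).

Inductive walk : vertex -> vertex -> nat -> Prop :=
| walk0 : forall u, walk u u 0
| walkS : forall u v w n, adj u v -> walk v w n -> walk u w (S n).

Definition dist_le (u v : vertex) (k : nat) : Prop :=
  exists m, (m <= k)%nat /\ walk u v m.

Definition dist_eq (u v : vertex) (k : nat) : Prop :=
  walk u v k /\ forall m, (m < k)%nat -> ~ walk u v m.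

Definition distance_coloring (l n : nat) (f : vertex -> nat) : Prop :=
  (forall v, (1 <= f v <= n)%nat) /\
  (forall u v, u <> v -> dist_le u v l -> f u <> f v).

(* Translate x to the origin and suppose that every vertex u of the sphere of radius p + 1
   has the colour of some vertex w of the ball of radius p.  As f is a 2p distance colouring,
   d(u, w) > 2p, so w lies on the sphere of radius p.  Two vertices u, v of the outer sphere
   with the same w share a colour, hence are more than 2p apart; a finite case analysis on a
   closed form of the distance shows that this only happens for two corners within one of
   two triples of corners, and never for a whole triple.  So u |-> w takes at least
   3(p + 1) - 2 = 3p + 1 values, while the sphere of radius p has only 3p vertices. *)

From Stdlib Require Import ZArith Lia List Classical IndefiniteDescription.
Open Scope Z_scope.

(* Graph distance from a right vertex to the vertex displaced from it by (a, b): a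
   hexagonal gauge, rounded up to the parity of a + b since T_H is bipartite.  Left
   vertices are reduced to right ones by the reflection i |-> -i, which swaps the two. *)
Definition hex_norm (a b : Z) : Z :=
  let M := Z.max (Z.abs a + Z.abs b) (Z.max (2*a-1) (-2*a)) in M + (M - a - b) mod 2.

Definition hex_dist (v w : vertex) : Z :=
  if Z.even (fst v + snd v) then hex_norm (fst w - fst v) (snd w - snd v)
  else hex_norm (fst v - fst w) (snd w - snd v).

Ltac revert_props := repeat match goal with H : ?T |- _ =>
  match type of T with Prop => revert H end end.
Ltac mod2_facts := repeat match goal with |- context [?e mod 2] =>
  let H1 := fresh in let H2 := fresh in
  pose proof (Z.mod_pos_bound e 2 ltac:(lia)) as H1; pose proof (Z.div_mod e 2 ltac:(lia)) as H2;
  revert H1 H2; generalize (e mod 2); generalize (e / 2) end.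
Ltac parity_lia := revert_props; mod2_facts; intros; lia.
Ltac case_even := repeat match goal with |- context [Z.even ?e] =>
  rewrite (Zeven_mod e); destruct (Z.eqb_spec (e mod 2) 0) end.
Ltac hex_lia := unfold hex_dist, hex_norm; cbn [fst snd]; case_even; parity_lia.

Lemma right_vertex_mod2 v : right_vertex v <-> (fst v + snd v) mod 2 = 0.
Proof. unfold right_vertex. rewrite <- Z.even_spec, Zeven_mod. apply Z.eqb_eq. Qed.

Lemma hex_dist_adj v v' w : adj v v' -> hex_dist v w <= hex_dist v' w + 1.
Proof.
  destruct v as [a b], v' as [a' b'], w as [c d].
  unfold adj; rewrite !right_vertex_mod2; cbn [fst snd]. hex_lia.
Qed.

Lemma hex_dist_refl v : hex_dist v v = 0.
Proof. destruct v as [a b]. hex_lia. Qed.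

Lemma hex_dist_ge0 v w : 0 <= hex_dist v w.
Proof. destruct v as [a b], w as [c d]. hex_lia. Qed.

Lemma hex_dist_eq0 v w : hex_dist v w = 0 -> v = w.
Proof.
  destruct v as [a b], w as [c d]. intro H.
  assert (a = c /\ b = d) as [-> ->] by (revert H; hex_lia). reflexivity.
Qed.

Lemma hex_dist_walk v w n : walk v w n -> hex_dist v w <= Z.of_nat n.
Proof.
  induction 1 as [u|u v w n Huv _ IH].
  - rewrite hex_dist_refl; lia.
  - pose proof (hex_dist_adj u v w Huv). lia.
Qed.

Lemma hex_dist_step v w : 0 < hex_dist v w -> exists v', adj v v' /\ hex_dist v' w = hex_dist v w - 1.
Proof.
  destruct v as [a b], w as [c d]. intro H.
  destruct (Z.eq_dec ((a+b) mod 2) 0) as [E|E];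
    [destruct (Z_le_gt_dec 1 (c-a)); [exists (a+1,b)|]
    |destruct (Z_le_gt_dec (c-a) (-1)); [exists (a-1,b)|]];
    try (destruct (Z_le_gt_dec 1 (d-b)); [exists (a,b+1)|exists (a,b-1)]);
    (split; [unfold adj; rewrite !right_vertex_mod2; cbn [fst snd] | revert H; hex_lia]);
    parity_lia.
Qed.

Lemma adj_sym u v : adj u v -> adj v u.
Proof. unfold adj; intros [H|[H|H]]; [left; lia | right; right; exact H | right; left; exact H]. Qed.

Lemma walk_app u v w m n : walk u v m -> walk v w n -> walk u w (m + n).
Proof. induction 1; intros; simpl; [assumption | eapply walkS; eauto]. Qed.

Lemma walk_rev u v n : walk u v n -> walk v u n.
Proof.
  induction 1 as [u|u v w n Huv _ IH]; [constructor|].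
  rewrite <- Nat.add_1_r. apply (walk_app _ v); [exact IH|].
  apply walkS with u; [apply adj_sym; exact Huv | constructor].
Qed.

Lemma walk_of_hex_dist n v w : hex_dist v w = Z.of_nat n -> walk v w n.
Proof.
  revert v; induction n as [|n IH]; intros v H.
  - apply hex_dist_eq0 in H; subst; constructor.
  - destruct (hex_dist_step v w) as [v' [Hadj Hv']]; [lia|].
    apply walkS with v'; [exact Hadj | apply IH; lia].
Qed.

Lemma walk_hex_dist v w : walk v w (Z.to_nat (hex_dist v w)).
Proof. apply walk_of_hex_dist. pose proof (hex_dist_ge0 v w). lia. Qed.

Lemma hex_dist_sym u v : hex_dist u v = hex_dist v u.
Proof.
  assert (Hle : forall u v, hex_dist u v <= hex_dist v u).
  { intros a b. pose proof (hex_dist_walk _ _ _ (walk_rev _ _ _ (walk_hex_dist b a))).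
    pose proof (hex_dist_ge0 b a). lia. }
  pose proof (Hle u v); pose proof (Hle v u); lia.
Qed.

Lemma hex_dist_triangle u v w : hex_dist u w <= hex_dist u v + hex_dist v w.
Proof.
  pose proof (hex_dist_walk _ _ _ (walk_app _ _ _ _ _ (walk_hex_dist u v) (walk_hex_dist v w))).
  pose proof (hex_dist_ge0 u v); pose proof (hex_dist_ge0 v w). lia.
Qed.

Lemma dist_le_iff_hex_dist u v k : dist_le u v k <-> hex_dist u v <= Z.of_nat k.
Proof.
  split.
  - intros [m [Hm Hw]]. apply hex_dist_walk in Hw. lia.
  - intro H. exists (Z.to_nat (hex_dist u v)). split; [lia | apply walk_hex_dist].
Qed.

Lemma dist_eq_of_hex_dist u v k : hex_dist u v = Z.of_nat k -> dist_eq u v k.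
Proof.
  intro H; split; [apply walk_of_hex_dist; exact H|].
  intros m Hm Hw. apply hex_dist_walk in Hw. lia.
Qed.

Lemma hex_dist_right a b w : (a+b) mod 2 = 0 -> hex_dist (a,b) w = hex_norm (fst w - a) (snd w - b).
Proof. intro H. unfold hex_dist. cbn [fst snd]. rewrite Zeven_mod, H. reflexivity. Qed.

Lemma hex_dist_left a b w : (a+b) mod 2 = 1 -> hex_dist (a,b) w = hex_norm (a - fst w) (snd w - b).
Proof. intro H. unfold hex_dist. cbn [fst snd]. rewrite Zeven_mod, H. reflexivity. Qed.

Definition shift (x u : vertex) : vertex := (fst x + fst u, snd x + snd u).

Lemma shift_inj x u v : shift x u = shift x v -> u = v.
Proof.
  destruct u as [a b], v as [c d]; unfold shift; cbn. intro E.
  apply pair_equal_spec in E as [E1 E2]. f_equal; lia.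
Qed.

Lemma hex_dist_shift x u v : right_vertex x -> hex_dist (shift x u) (shift x v) = hex_dist u v.
Proof.
  destruct x as [x1 x2], u as [a b], v as [c d]. rewrite right_vertex_mod2.
  unfold hex_dist, shift; cbn [fst snd]; intro Hx.
  replace (Z.even (x1 + a + (x2 + b))) with (Z.even (a + b))
    by (rewrite !Zeven_mod; f_equal; revert Hx; parity_lia).
  destruct (Z.even (a + b)); f_equal; lia.
Qed.

Lemma hex_dist_from_right x w : right_vertex x ->
  hex_dist x w = hex_norm (fst w - fst x) (snd w - snd x).
Proof. destruct x as [a b]. rewrite right_vertex_mod2. apply hex_dist_right. Qed.

Lemma hex_dist_origin w : hex_dist (0, 0) w = hex_norm (fst w) (snd w).
Proof. rewrite hex_dist_from_right by (exists 0; reflexivity). cbn. rewrite !Z.sub_0_r. reflexivity. Qed.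

Ltac div2_facts := repeat match goal with |- context [?e / 2] =>
  let H1 := fresh in let H2 := fresh in
  pose proof (Z.mod_pos_bound e 2 ltac:(lia)) as H1; pose proof (Z.div_mod e 2 ltac:(lia)) as H2;
  revert H1 H2; generalize (e mod 2); generalize (e / 2) end.
Ltac div2_lia := revert_props; div2_facts; mod2_facts; intros; lia.

(* The sphere of radius p splits into three arcs on which b - a, a and a + b respectively
   separate points; concatenating the arcs embeds the sphere into [0, 3p). *)
Definition sphere_index (p : Z) (w : vertex) : Z :=
  let (a, b) := w in
  if ((a <? 0) && (a + b <=? 0))%bool then (b - a + p - 2) / 2
  else if ((0 <? a + b) && (a <=? b))%bool then 2 * (p / 2) + a + (p - 1) / 2
  else 2 * (p / 2) + p + (a + b + p) / 2.

Ltac case_index := cbv beta iota delta [sphere_index andb];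
  repeat match goal with |- context [?a <? ?b] => destruct (Z.ltb_spec a b)
                       | |- context [?a <=? ?b] => destruct (Z.leb_spec a b) end.

Lemma sphere_index_range p w : 0 < p -> hex_norm (fst w) (snd w) = p -> 0 <= sphere_index p w < 3 * p.
Proof. destruct w as [a b]; cbn [fst snd]; unfold hex_norm. case_index; div2_lia. Qed.

Lemma sphere_index_inj p w w' : hex_norm (fst w) (snd w) = p -> hex_norm (fst w') (snd w') = p ->
  sphere_index p w = sphere_index p w' -> w = w'.
Proof.
  destruct w as [a b], w' as [c d]; cbn [fst snd]; unfold hex_norm. intros H H' E.
  enough (a = c /\ b = d) as [-> ->] by reflexivity.
  revert H H' E; case_index; case_index; div2_lia.
Qed.

Lemma sphere_NoDup_length p (l : list vertex) : 0 < p -> NoDup l ->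
  (forall w, In w l -> hex_norm (fst w) (snd w) = p) -> Z.of_nat (length l) <= 3 * p.
Proof.
  intros Hp Hl Hsph.
  set (idx := fun w => Z.to_nat (sphere_index p w)).
  assert (Hidx : forall w, In w l -> 0 <= sphere_index p w < 3 * p)
    by (intros w Hw; exact (sphere_index_range p w Hp (Hsph w Hw))).
  assert (Hnd : NoDup (map idx l)).
  { apply NoDup_map_NoDup_ForallPairs; [|exact Hl].
    intros w w' Hw Hw' E. apply (sphere_index_inj p); auto.
    pose proof (Hidx w Hw); pose proof (Hidx w' Hw'). unfold idx in E. lia. }
  assert (Hincl : incl (map idx l) (seq 0 (Z.to_nat (3 * p)))).
  { intros i Hi. apply in_map_iff in Hi as [w [<- Hw]]. apply in_seq.
    pose proof (Hidx w Hw). unfold idx. lia. }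
  pose proof (NoDup_incl_length Hnd Hincl). rewrite length_map, length_seq in H. lia.
Qed.

Definition hex_max_le (a b K : Z) : Prop :=
  a+b <= K /\ a-b <= K /\ -a+b <= K /\ -a-b <= K /\ 2*a-1 <= K /\ -2*a <= K.
Definition hex_max_ge (a b K : Z) : Prop :=
  K <= a+b \/ K <= a-b \/ K <= -a+b \/ K <= -a-b \/ K <= 2*a-1 \/ K <= -2*a.

Lemma hex_norm_eq_bounds a b K : hex_norm a b = K -> hex_max_le a b K /\ exists s, K - a - b = 2 * s.
Proof.
  unfold hex_max_le, hex_norm. intro H.
  assert (Hpar : (K - a - b) mod 2 = 0) by parity_lia.
  split; [parity_lia | apply Z.mod_divide in Hpar as [s Hs]; [exists s; lia | lia]].
Qed.

Lemma hex_norm_gt_even a b K : (a+b) mod 2 = 0 -> K mod 2 = 0 -> K < hex_norm a b -> hex_max_ge a b (K+1).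
Proof. unfold hex_max_ge, hex_norm. parity_lia. Qed.

Lemma hex_norm_gt_odd a b K : (a+b) mod 2 = 1 -> K < hex_norm a b -> hex_max_ge a b K.
Proof. unfold hex_max_ge, hex_norm. parity_lia. Qed.

(* For p + 1 = 2m + r, the sphere of radius p + 1 around the origin consists of six
   straight sides and six corners, the corners forming two triples. *)
Definition sphere_side (m r : Z) (u : vertex) : Prop :=
  (exists i, 1 <= i <= m-1 /\ u = (m+r, -m+2*i)) \/
  (exists i, 1 <= i <= m+r-1 /\ u = (-m, -(m+r)+2*i)) \/
  (exists t, 1 <= t <= m+r-1 /\ u = (t, 2*m+r-t)) \/
  (exists t, 1 <= t <= m+r-1 /\ u = (t, -(2*m+r-t))) \/
  (exists t, 1 <= t <= m-1 /\ u = (-t, 2*m+r-t)) \/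
  (exists t, 1 <= t <= m-1 /\ u = (-t, -(2*m+r-t))).
Definition corner1 (m r : Z) (u : vertex) : Prop :=
  u = (0, 2*m+r) \/ u = (m+r, -m) \/ u = (-m, -(m+r)).
Definition corner2 (m r : Z) (u : vertex) : Prop :=
  u = (0, -(2*m+r)) \/ u = (m+r, m) \/ u = (-m, m+r).
Definition sphere_config (m r : Z) (u : vertex) : Prop :=
  sphere_side m r u \/ corner1 m r u \/ corner2 m r u.

Ltac case_config H := unfold sphere_config, sphere_side, corner1, corner2 in H;
  repeat match type of H with
  | _ \/ _ => destruct H as [H|H]
  | exists _, _ => let i := fresh "i" in let Hi := fresh "Hi" in destruct H as [i [Hi H]]
  end; subst.
Ltac side_condition_lia := repeat match goal with
  | H : context [hex_dist _ _] |- _ => clear H | H : context [hex_norm _ _] |- _ => clear H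
  | H : hex_max_ge _ _ _ |- _ => clear H | H : hex_max_le _ _ _ |- _ => clear H
  | H : _ <> _ |- _ => clear H end; parity_lia.
(* Turns [K < hex_dist u w] with [u] explicit into a disjunction of linear bounds. *)
Ltac far_to_linear H :=
  (rewrite hex_dist_right in H by side_condition_lia) || (rewrite hex_dist_left in H by side_condition_lia);
  cbn [fst snd] in H;
  first [ eapply hex_norm_gt_even in H; [ | side_condition_lia | side_condition_lia ]
        | eapply hex_norm_gt_odd in H; [ | side_condition_lia ] ].

Lemma side_no_common_far_point m r u v w : 2 <= m -> (r = 0 \/ r = 1) ->
  sphere_side m r u -> sphere_config m r v -> u <> v ->
  2*(2*m+r-1) < hex_dist u v -> 2*(2*m+r-1) < hex_dist u w -> 2*(2*m+r-1) < hex_dist v w ->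
  hex_norm (fst w) (snd w) = 2*m+r-1 -> False.
Proof.
  intros Hm Hr Hu Hv Hne Huv Huw Hvw Hw. destruct w as [c d]; cbn [fst snd] in Hw.
  apply hex_norm_eq_bounds in Hw as [Hw [s Hs]]; unfold hex_max_le in Hw.
  destruct Hr; subst r; case_config Hu; case_config Hv;
    far_to_linear Huv; far_to_linear Huw; far_to_linear Hvw; unfold hex_max_ge in *;
    try (apply Hne; f_equal); lia.
Qed.

Lemma corners_no_common_far_point m r u v w : 2 <= m -> (r = 0 \/ r = 1) ->
  corner1 m r u -> corner2 m r v ->
  2*(2*m+r-1) < hex_dist u v -> 2*(2*m+r-1) < hex_dist u w -> 2*(2*m+r-1) < hex_dist v w ->
  hex_norm (fst w) (snd w) = 2*m+r-1 -> False.
Proof.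
  intros Hm Hr Hu Hv Huv Huw Hvw Hw. destruct w as [c d]; cbn [fst snd] in Hw.
  apply hex_norm_eq_bounds in Hw as [Hw [s Hs]]; unfold hex_max_le in Hw.
  destruct Hr; subst r; case_config Hu; case_config Hv;
    far_to_linear Huv; far_to_linear Huw; far_to_linear Hvw; unfold hex_max_ge in *; lia.
Qed.

Lemma corner1_no_common_far_point m r w : 2 <= m -> (r = 0 \/ r = 1) ->
  2*(2*m+r-1) < hex_dist (0, 2*m+r) w -> 2*(2*m+r-1) < hex_dist (m+r, -m) w ->
  2*(2*m+r-1) < hex_dist (-m, -(m+r)) w -> hex_norm (fst w) (snd w) = 2*m+r-1 -> False.
Proof.
  intros Hm Hr H1 H2 H3 Hw. destruct w as [c d]; cbn [fst snd] in Hw.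
  apply hex_norm_eq_bounds in Hw as [Hw [s Hs]]; unfold hex_max_le in Hw.
  destruct Hr; subst r; far_to_linear H1; far_to_linear H2; far_to_linear H3;
    unfold hex_max_ge in *; lia.
Qed.

Lemma corner2_no_common_far_point m r w : 2 <= m -> (r = 0 \/ r = 1) ->
  2*(2*m+r-1) < hex_dist (0, -(2*m+r)) w -> 2*(2*m+r-1) < hex_dist (m+r, m) w ->
  2*(2*m+r-1) < hex_dist (-m, m+r) w -> hex_norm (fst w) (snd w) = 2*m+r-1 -> False.
Proof.
  intros Hm Hr H1 H2 H3 Hw. destruct w as [c d]; cbn [fst snd] in Hw.
  apply hex_norm_eq_bounds in Hw as [Hw [s Hs]]; unfold hex_max_le in Hw.
  destruct Hr; subst r; far_to_linear H1; far_to_linear H2; far_to_linear H3;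
    unfold hex_max_ge in *; lia.
Qed.

Lemma sphere_config_norm m r u : 2 <= m -> (r = 0 \/ r = 1) -> sphere_config m r u ->
  hex_norm (fst u) (snd u) = 2*m+r.
Proof. intros Hm Hr Hu. destruct Hr; subst r; case_config Hu; cbn [fst snd]; unfold hex_norm; parity_lia. Qed.

Definition side_point (m r k : Z) : vertex :=
  if k <? m-1 then (m+r, -m+2*(k+1))
  else if k <? 2*m+r-2 then (-m, -(m+r)+2*(k-(m-1)+1))
  else if k <? 3*m+2*r-3 then (k-(2*m+r-2)+1, 2*m+r-(k-(2*m+r-2)+1))
  else if k <? 4*m+3*r-4 then (k-(3*m+2*r-3)+1, -(2*m+r-(k-(3*m+2*r-3)+1)))
  else if k <? 5*m+3*r-5 then (-(k-(4*m+3*r-4)+1), 2*m+r-(k-(4*m+3*r-4)+1))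
  else (-(k-(5*m+3*r-5)+1), -(2*m+r-(k-(5*m+3*r-5)+1))).

Definition side_list (m r : Z) : list vertex :=
  map (fun k => side_point m r (Z.of_nat k)) (seq 0 (Z.to_nat (6*m+3*r-6))).

Ltac case_ltb := repeat match goal with |- context [?a <? ?b] => destruct (Z.ltb_spec a b) end.

Lemma side_point_side m r k : 0 <= k < 6*m+3*r-6 -> sphere_side m r (side_point m r k).
Proof.
  intro Hk. unfold side_point, sphere_side. case_ltb;
    repeat first [left; eexists; split; [|reflexivity]; lia | right].
  eexists; split; [|reflexivity]; lia.
Qed.

Lemma side_point_inj m r k k' : 2 <= m -> (r = 0 \/ r = 1) -> 0 <= k < 6*m+3*r-6 -> 0 <= k' < 6*m+3*r-6 ->
  side_point m r k = side_point m r k' -> k = k'.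
Proof.
  intros Hm Hr Hk Hk'. unfold side_point. case_ltb; case_ltb; intro E;
    apply pair_equal_spec in E as [E1 E2]; lia.
Qed.

Lemma side_list_side m r u : In u (side_list m r) -> sphere_side m r u.
Proof. unfold side_list. intro Hu. apply in_map_iff in Hu as [k [<- Hk]].
  apply in_seq in Hk. apply side_point_side. lia. Qed.

Lemma side_list_NoDup m r : 2 <= m -> (r = 0 \/ r = 1) -> NoDup (side_list m r).
Proof.
  intros Hm Hr. apply NoDup_map_NoDup_ForallPairs; [|apply seq_NoDup].
  intros k k' Hk Hk' E. apply in_seq in Hk, Hk'. apply side_point_inj in E; lia.
Qed.

Lemma side_list_length m r : length (side_list m r) = Z.to_nat (6*m+3*r-6).
Proof. unfold side_list. rewrite length_map, length_seq. reflexivity. Qed.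

Lemma side_not_corner m r u : 2 <= m -> (r = 0 \/ r = 1) ->
  sphere_side m r u -> corner1 m r u \/ corner2 m r u -> False.
Proof.
  intros Hm Hr Hu Hc. unfold corner1, corner2 in Hc.
  repeat match type of Hc with _ \/ _ => destruct Hc as [Hc|Hc] end; subst u;
    case_config Hu; apply pair_equal_spec in Hu; lia.
Qed.

Lemma corner1_not_corner2 m r u : 2 <= m -> (r = 0 \/ r = 1) -> corner1 m r u -> corner2 m r u -> False.
Proof.
  intros Hm Hr Hu Hv. unfold corner1, corner2 in *.
  destruct Hv as [Hv|[Hv|Hv]]; subst u; destruct Hu as [H|[H|H]]; apply pair_equal_spec in H; lia.
Qed.

Lemma triple_distinct_images {A B : Type} (F : A -> B) a b c :
  ~ (F a = F b /\ F a = F c) ->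
  exists y z, (y = a \/ y = b \/ y = c) /\ (z = a \/ z = b \/ z = c) /\ F y <> F z.
Proof.
  intro H. destruct (classic (F a = F b)) as [Eab|Eab].
  - exists a, c. split; [auto|split; [auto|]]. intro Eac. exact (H (conj Eab Eac)).
  - exists a, b. auto.
Qed.

Definition far_match (p : Z) (f : vertex -> nat) (u w : vertex) : Prop :=
  hex_norm (fst w) (snd w) = p /\ f u = f w /\ 2*p < hex_dist u w.

Section FarMatching.

Variables (m r : Z) (f : vertex -> nat) (W : vertex -> vertex).
Hypothesis Hm : 2 <= m.
Hypothesis Hr : r = 0 \/ r = 1.
Local Notation p := (2*m+r-1).
Hypothesis colouring : forall u v, u <> v -> hex_dist u v <= 2*p -> f u <> f v.
Hypothesis matching : forall u, sphere_config m r u -> far_match p f u (W u).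

Lemma matching_collision u v : sphere_config m r u -> sphere_config m r v -> u <> v -> W u = W v ->
  2*p < hex_dist u v /\ 2*p < hex_dist u (W u) /\ 2*p < hex_dist v (W u) /\
  hex_norm (fst (W u)) (snd (W u)) = p.
Proof.
  intros Hu Hv Hne E.
  destruct (matching u Hu) as [Hnorm [Hfu Hfar_u]], (matching v Hv) as [_ [Hfv Hfar_v]].
  rewrite <- E in Hfv, Hfar_v. repeat split; auto.
  apply Z.nle_gt. intro Hle. apply (colouring u v Hne Hle). congruence.
Qed.

Lemma matching_inj_side u v : sphere_side m r u -> sphere_config m r v -> W u = W v -> u = v.
Proof.
  intros Hu Hv E. apply NNPP. intro Hne.
  assert (Hu' : sphere_config m r u) by (left; exact Hu).
  destruct (matching_collision u v Hu' Hv Hne E) as [H1 [H2 [H3 H4]]].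
  exact (side_no_common_far_point m r u v (W u) Hm Hr Hu Hv Hne H1 H2 H3 H4).
Qed.

Lemma matching_corners u v : corner1 m r u -> corner2 m r v -> W u <> W v.
Proof.
  intros Hu Hv E.
  assert (Hne : u <> v) by (intros <-; exact (corner1_not_corner2 m r u Hm Hr Hu Hv)).
  assert (Hu' : sphere_config m r u) by (right; left; exact Hu).
  assert (Hv' : sphere_config m r v) by (right; right; exact Hv).
  destruct (matching_collision u v Hu' Hv' Hne E) as [H1 [H2 [H3 H4]]].
  exact (corners_no_common_far_point m r u v (W u) Hm Hr Hu Hv H1 H2 H3 H4).
Qed.

Lemma matching_triple a b c : sphere_config m r a -> sphere_config m r b -> sphere_config m r c ->
  (forall w, 2*p < hex_dist a w -> 2*p < hex_dist b w -> 2*p < hex_dist c w ->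
     hex_norm (fst w) (snd w) = p -> False) ->
  exists y z, (y = a \/ y = b \/ y = c) /\ (z = a \/ z = b \/ z = c) /\ W y <> W z.
Proof.
  intros Ha Hb Hc Hnone. apply triple_distinct_images. intros [Eab Eac].
  destruct (matching a Ha) as [Hn [_ Hda]], (matching b Hb) as [_ [_ Hdb]],
    (matching c Hc) as [_ [_ Hdc]].
  rewrite <- Eab in Hdb. rewrite <- Eac in Hdc.
  exact (Hnone (W a) Hda Hdb Hdc Hn).
Qed.

Lemma corner1_pair : exists c c', corner1 m r c /\ corner1 m r c' /\ W c <> W c'.
Proof.
  apply matching_triple; try (right; left; unfold corner1; auto).
  intro w. exact (corner1_no_common_far_point m r w Hm Hr).
Qed.

Lemma corner2_pair : exists c c', corner2 m r c /\ corner2 m r c' /\ W c <> W c'.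
Proof.
  apply matching_triple; try (right; right; unfold corner2; auto).
  intro w. exact (corner2_no_common_far_point m r w Hm Hr).
Qed.

(* [L] holds the sides and two corners from each triple: 3p + 1 vertices whose
   images under [W] are distinct points of the sphere of radius p. *)
Lemma no_far_matching : False.
Proof.
  destruct corner1_pair as [c1 [c1' [Hc1 [Hc1' E1]]]].
  destruct corner2_pair as [c2 [c2' [Hc2 [Hc2' E2]]]].
  set (L := side_list m r ++ c1 :: c1' :: c2 :: c2' :: nil).
  assert (Hside : forall u, In u (side_list m r) -> sphere_config m r u)
    by (intros u Hu; left; exact (side_list_side m r u Hu)).
  assert (Hnd : NoDup (map W L)).
  { unfold L. rewrite map_app. apply NoDup_app.
    - apply NoDup_map_NoDup_ForallPairs; [|exact (side_list_NoDup m r Hm Hr)].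
      intros u v Hu Hv. apply matching_inj_side; [apply side_list_side | apply Hside]; assumption.
    - pose proof (matching_corners c1 c2 Hc1 Hc2); pose proof (matching_corners c1 c2' Hc1 Hc2');
      pose proof (matching_corners c1' c2 Hc1' Hc2); pose proof (matching_corners c1' c2' Hc1' Hc2').
      repeat constructor; cbn; intuition congruence.
    - intros w Hw Hw'. apply in_map_iff in Hw as [u [<- Hu]].
      assert (Hc : forall c, corner1 m r c \/ corner2 m r c -> W u <> W c).
      { intros c Hc E. apply (side_not_corner m r c Hm Hr); [|exact Hc].
        rewrite <- (matching_inj_side u c (side_list_side m r u Hu)); [|destruct Hc; right; auto | exact E].
        apply side_list_side; exact Hu. }
      cbn in Hw'. destruct Hw' as [E|[E|[E|[E|[]]]]]; symmetry in E; revert E; apply Hc; auto. }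
  assert (Hsph : forall w, In w (map W L) -> hex_norm (fst w) (snd w) = p).
  { intros w Hw. apply in_map_iff in Hw as [u [<- Hu]]. apply matching.
    apply in_app_iff in Hu as [Hu|Hu]; [auto|].
    cbn in Hu. destruct Hu as [<-|[<-|[<-|[<-|[]]]]]; unfold sphere_config; auto. }
  pose proof (sphere_NoDup_length p (map W L) ltac:(lia) Hnd Hsph) as Hlen.
  unfold L in Hlen. rewrite length_map, length_app, side_list_length in Hlen. cbn [length] in Hlen.
  lia.
Qed.
End FarMatching.

Lemma far_match_of_same_colour p (f : vertex -> nat) u w :
  (forall u v, u <> v -> hex_dist u v <= 2*p -> f u <> f v) ->
  hex_norm (fst u) (snd u) = p + 1 -> hex_norm (fst w) (snd w) <= p -> f u = f w ->
  far_match p f u w.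
Proof.
  intros Hcol Hu Hw E.
  assert (Hfar : 2*p < hex_dist u w).
  { apply Z.nle_gt. intro Hle. refine (Hcol u w _ Hle E). intros <-. lia. }
  pose proof (hex_dist_triangle u (0, 0) w) as Htri.
  rewrite (hex_dist_sym u (0, 0)), !hex_dist_origin in Htri.
  repeat split; [lia | exact E | exact Hfar].
Qed.

Lemma sphere_colour_escapes_at_origin p (f : vertex -> nat) : 3 <= p ->
  (forall u v, u <> v -> hex_dist u v <= 2*p -> f u <> f v) ->
  exists u, hex_norm (fst u) (snd u) = p + 1 /\
    forall w, hex_norm (fst w) (snd w) <= p -> f u <> f w.
Proof.
  intros Hp Hcol. apply NNPP. intro Hno.
  set (m := (p + 1) / 2); set (r := (p + 1) mod 2).
  assert (Hmr : p = 2*m + r - 1 /\ 2 <= m /\ (r = 0 \/ r = 1))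
    by (unfold m, r; clear -Hp; parity_lia).
  destruct Hmr as [Hpmr [Hm Hr]]. clearbody m r. subst p.
  destruct (functional_choice (fun u w => sphere_config m r u -> far_match (2*m+r-1) f u w))
    as [W HW].
  { intro u. destruct (classic (sphere_config m r u)) as [Hu|Hu]; [|exists u; tauto].
    assert (Hnorm : hex_norm (fst u) (snd u) = 2*m+r-1 + 1)
      by (rewrite (sphere_config_norm m r u Hm Hr Hu); lia).
    destruct (classic (exists w, hex_norm (fst w) (snd w) <= 2*m+r-1 /\ f u = f w))
      as [[w [Hw E]]|Hnone].
    - exists w. intros _. exact (far_match_of_same_colour _ f u w Hcol Hnorm Hw E).
    - exfalso. apply Hno. exists u. split; [exact Hnorm|].
      intros w Hw E. apply Hnone. exists w. auto. }
  exact (no_far_matching m r f W Hm Hr Hcol HW).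
Qed.

Theorem theorem1 (p : nat) (x : vertex) (n : nat) (f : vertex -> nat) :
  (3 <= p)%nat ->
  right_vertex x ->
  distance_coloring (2 * p) n f ->
  exists u : vertex,
    dist_eq x u (p + 1) /\
    (forall w : vertex, dist_le w x p -> f u <> f w).
Proof.
  intros Hp Hx [_ Hcol].
  destruct (sphere_colour_escapes_at_origin (Z.of_nat p) (fun u => f (shift x u)))
    as [u [Hu Hesc]]; [lia| |].
  - intros u v Hne Hd. apply Hcol; [intro E; exact (Hne (shift_inj x u v E))|].
    apply dist_le_iff_hex_dist. rewrite hex_dist_shift by exact Hx. lia.
  - exists (shift x u). split.
    + apply dist_eq_of_hex_dist. rewrite hex_dist_from_right by exact Hx. cbn.
      replace (fst x + fst u - fst x) with (fst u) by lia.
      replace (snd x + snd u - snd x) with (snd u) by lia. lia.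
    + intros w Hw. apply dist_le_iff_hex_dist in Hw. rewrite hex_dist_sym, hex_dist_from_right in Hw by exact Hx.
      replace w with (shift x (fst w - fst x, snd w - snd x))
        by (unfold shift; cbn; destruct w; cbn; f_equal; lia).
      apply Hesc. cbn. exact Hw.
Qed.
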